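(* In the setting of the context, let $\theta^*$ be an indifference index consistent with the inverse problem and $X^{m,s}$ a corresponding solution, and let $\hat R_{m,s}(x)=G(x,\theta^*(x))-\varphi_{m,s}(x)V(\theta^*(x))$ on $X^*(\Theta)$. If the function $R_{m,s}(x)=G(x,\theta^*(x))+\varphi_{m,s}(x)(R_{m,s}(X_0)-V(\theta^*(x)))$ solves $\frac12\frac{d}{dm}\frac{d}{ds}f=\rho f-c$, then so does $\hat R_{m,s}$.
   Context: Data: $\rho>0$, an interval $\Theta$, a differentiable $V:\Theta\to\mathbb{R}$, a twice continuously differentiable $G(x,\theta)$, a running reward $c(x)$, a starting point $X_0$. For a speed measure $m$ and strictly increasing continuous scale $s$, $X^{m,s}$ is the regular one-dimensional generalised diffusion with these characteristics on state space $I^m$ started at $X_0$ (either both endpoints non-reflecting, or started at a reflecting endpoint with the other non-reflecting); $\mathrm{int}(I^m)$ is the interior plus accessible boundary points. $X^{m,s}$ solves the inverse problem if $V_{X^{m,s}}(\theta):=\sup_\tau\mathbb{E}_{X_0}[\int_0^\tau e^{-\rho t}c(X^{m,s}_t)dt+e^{-\rho\tau}G(X^{m,s}_\tau,\theta)]=V(\theta)$ for all $\theta$ and the value is attained by stopping at the hitting time of a threshold $\ge X_0$. $\varphi_{m,s}$ is the increasing positive solution of $\frac12\frac{d}{dm}\frac{d}{ds}f=\rho f$ with $\varphi_{m,s}(X_0)=1$; $R_{m,s}(X_0)=\mathbb{E}_{X_0}[\int_0^\infty e^{-\rho t}c(X^{m,s}_t)dt]$. $X^*(\theta)=\arg\max_{x\in\mathrm{int}(I^m)}(G(x,\theta)-R_{m,s}(x))/\varphi_{m,s}(x)$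 and $X^*(\Theta)=\bigcup_\theta X^*(\theta)$. An indifference index $\theta^*:I^m\to\Theta$ is consistent if for some solution $X^{m,s}$, $x^*=(\theta^* )^{-1}$ is an optimal threshold strategy, i.e. $x\in X^*(\theta^*(x))$. *)

From HB Require Import structures.
From mathcomp Require Import all_boot all_order all_algebra.
From mathcomp Require Import all_classical all_reals all_analysis.
Set Implicit Arguments. Unset Strict Implicit. Unset Printing Implicit Defensive.
Import Order.TTheory GRing.Theory Num.Theory.
Import numFieldNormedType.Exports.
Local Open Scope classical_set_scope.
Local Open Scope ring_scope.

(* [gen_solves m s D f h] : f solves  (1/2) d/dm d/ds f = h  on D, i.e.
   f has a right s-derivative df at every point of D (limit taken within D),
   and the increments of df are given by the measure 2 h dm:
     df b - df a = 2 * int_{]a,b]} h dm   for a < b in D. *)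
Definition gen_solves (R : realType)
  (m : {measure set R -> \bar R}) (s : R -> R) (D : set R) (f h : R -> R) : Prop :=
  exists df : R -> R,
    (forall x, D x ->
       (fun y => (f y - f x) / (s y - s x)) @
         within (fun y => D y /\ x < y) (nbhs x) --> df x) /\
    (forall a b, D a -> D b -> a < b ->
       m.-integrable `]a, b] (EFin \o h) /\
       df b - df a = 2 * Rintegral m `]a, b] h).

Definition C2_2 (R : realType) (G : R -> R -> R) : Prop :=
  let g := fun p : R * R => G p.1 p.2 in
  forall v w : R * R,
    (forall p, derivable g p v) /\
    (forall p, derivable ('D_v g) p w) /\
    continuous ('D_w ('D_v g)).

Definition Xstar (R : realType) (intI : set R) (G : R -> R -> R)
  (Rms phi : R -> R) (theta : R) : set R :=
  [set x | intI x /\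
     forall y, intI y -> (G y theta - Rms y) / phi y <= (G x theta - Rms x) / phi x].

From HB Require Import structures.
From mathcomp Require Import all_boot all_order all_algebra.
From mathcomp Require Import all_classical all_reals all_analysis.
From mathcomp Require Import ring.
Import Order.TTheory GRing.Theory Num.Theory.
Import numFieldNormedType.Exports.
Local Open Scope classical_set_scope.
Local Open Scope ring_scope.

(* The generalised equation is linear, and
   hat R = R - R(X0) phi with phi solving the homogeneous equation
   (1/2) d/dm d/ds phi = rho phi; so hat R solves the same equation as R. *)

Section GenSolvesLinear.
Context {R : realType} {m : {measure set R -> \bar R}} {s : R -> R} {D : set R}.

Lemma gen_solvesZ (a : R) {f h : R -> R} :
  gen_solves m s D f h -> gen_solves m s D (fun x => a * f x) (fun x => a * h x).
Proof.
move=> [df [dfP dfI]]; exists (fun x => a * df x); split.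
  move=> x Dx; apply: cvg_trans _ (cvgM (cvg_cst a) (dfP x Dx)).
  by apply: near_eq_cvg; near=> y; rewrite /= -mulrBr mulrA.
move=> u v Du Dv uv; have [hI dfE] := dfI u v Du Dv uv.
have mI : measurable `]u, v] := measurable_itv _.
split; first by apply: eq_integrable (integrableZl mI a hI).
by rewrite RintegralZl // -mulrBr dfE mulrCA.
Unshelve. all: by end_near.
Qed.

Lemma gen_solvesB {f g h k : R -> R} :
  gen_solves m s D f h -> gen_solves m s D g k ->
  gen_solves m s D (fun x => f x - g x) (fun x => h x - k x).
Proof.
move=> [df [dfP dfI]] [dg [dgP dgI]]; exists (fun x => df x - dg x); split.
  move=> x Dx; apply: cvg_trans _ (cvgB (dfP x Dx) (dgP x Dx)).
  by apply: near_eq_cvg; near=> y; rewrite /= !fctE; ring.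
move=> u v Du Dv uv.
have [hI dfE] := dfI u v Du Dv uv; have [kI dgE] := dgI u v Du Dv uv.
have mI : measurable `]u, v] := measurable_itv _.
split; first by apply: eq_integrable (integrableB mI hI kI).
by rewrite RintegralB // mulrBr -dfE -dgE; ring.
Unshelve. all: by end_near.
Qed.

End GenSolvesLinear.

Theorem lemma4p13 (R : realType)
  (rho : R) (Theta : set R) (V : R -> R) (G : R -> R -> R) (c : R -> R) (X0 : R)
  (m : {measure set R -> \bar R}) (s : R -> R)
  (I intI : set R)
  (phi Rms : R -> R) (thetastar : R -> R) :
  0 < rho ->
  is_interval Theta ->
  (forall t, Theta t -> derivable V t 1) ->
  C2_2 G ->
  {homo s : x y / x < y} -> continuous s ->
  is_interval I -> intI `<=` I -> I X0 ->
  {in I &, {homo phi : x y / x < y}} ->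
  (forall x, I x -> 0 < phi x) -> phi X0 = 1 ->
  gen_solves m s intI phi (fun x => rho * phi x) ->
  (forall x, I x -> Theta (thetastar x)) ->
  (forall x, intI x -> Xstar intI G Rms phi (thetastar x) x) ->
  gen_solves m s intI
    (fun x => G x (thetastar x) + phi x * (Rms X0 - V (thetastar x)))
    (fun x => rho * (G x (thetastar x) + phi x * (Rms X0 - V (thetastar x))) - c x) ->
  gen_solves m s intI
    (fun x => G x (thetastar x) - phi x * V (thetastar x))
    (fun x => rho * (G x (thetastar x) - phi x * V (thetastar x)) - c x).
Proof.
move=> _ _ _ _ _ _ _ _ _ _ _ _ phi_solves _ _ R_solves.
have -> : (fun x => G x (thetastar x) - phi x * V (thetastar x)) =
    (fun x => (G x (thetastar x) + phi x * (Rms X0 - V (thetastar x)))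
              - Rms X0 * phi x).
  by apply/funext => x; ring.
have -> : (fun x => rho * (G x (thetastar x) - phi x * V (thetastar x)) - c x) =
    (fun x => (rho * (G x (thetastar x) + phi x * (Rms X0 - V (thetastar x))) - c x)
              - Rms X0 * (rho * phi x)).
  by apply/funext => x; ring.
exact: gen_solvesB R_solves (gen_solvesZ (Rms X0) phi_solves).
Qed.
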